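(* Let $N$ be a finite set and let $s:2^N\to\mathbb{R}$ be a set function whose type-4 Fourier support is $\mathrm{supp}(\widehat{s})=\{B\subseteq N:\widehat{s}^{(4)}_B\neq 0\}=\{B_1,\dots,B_k\}=\mathcal{B}$ (with $B_1,\dots,B_k$ distinct). Let $\mathcal{A}=\{N\setminus B_1,\dots,N\setminus B_k\}$. Let $F^{-1}$ denote the $2^{|N|}\times 2^{|N|}$ matrix $[\mathbb{1}_{A\cap B=\emptyset}]_{A,B\subseteq N}$ (row index $A$, column index $B$), and let $T=(F^{-1})_{\mathcal{A}\mathcal{B}}$ be its submatrix with rows in $\mathcal{A}$ and columns in $\mathcal{B}$. Then $T$ is invertible and $$\mathbf{s}=\big((F^{-1})_{2^N\mathcal{B}}\,T^{-1}\big)\,\mathbf{s}_{\mathcal{A}},$$ where $\mathbf{s}=(s_A)_{A\subseteq N}$, $\mathbf{s}_{\mathcal{A}}=(s_A)_{A\in\mathcal{A}}$, and $(F^{-1})_{2^N\mathcal{B}}$ is the submatrix of $F^{-1}$ consisting of the columns indexed by $\mathcal{B}$.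
   Context: The type-4 discrete set Fourier transform of $s$ is $\widehat{s}^{(4)}_B=\sum_{A\subseteq N,\,A\cup B=N}(-1)^{|A\cap B|}s_A$ for $B\subseteq N$; its inverse is $s_A=\sum_{B\subseteq N,\,A\cap B=\emptyset}\widehat{s}^{(4)}_B$, i.e., $F^{-1}=[\mathbb{1}_{A\cap B=\emptyset}]_{A,B}$ is the inverse of the type-4 transform matrix. Here $\mathbb{1}_P$ is $1$ if $P$ holds and $0$ otherwise. *)

From mathcomp Require Import all_boot all_order all_algebra.
Set Implicit Arguments. Unset Strict Implicit. Unset Printing Implicit Defensive.
Import GRing.Theory Num.Theory.
Local Open Scope ring_scope.

Definition fourier4 (R : ringType) (N : finType) (s : {set N} -> R)
  (B : {set N}) : R :=
  \sum_(A : {set N} | A :|: B == [set: N]) (-1) ^+ #|A :&: B| * s A.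

Definition Finv_entry (R : ringType) (N : finType) (A B : {set N}) : R :=
  (A :&: B == set0)%:R.

(* Subsets of N indexed by 'I_#|{set N}| via enum_val (a fixed enumeration of 2^N). *)
Notation nsub N := #|{: {set N}}|.

Definition Finv_cols (R : ringType) (N : finType) (k : nat)
  (B : 'I_k -> {set N}) : 'M[R]_(nsub N, k) :=
  \matrix_(a < nsub N, j < k) Finv_entry R (enum_val a) (B j).

Definition Tmat (R : ringType) (N : finType) (k : nat)
  (B : 'I_k -> {set N}) : 'M[R]_k :=
  \matrix_(i < k, j < k) Finv_entry R (~: B i) (B j).

Definition svec (R : ringType) (N : finType) (s : {set N} -> R) : 'cV[R]_(nsub N) :=
  \col_(a < nsub N) s (enum_val a).

Definition svecA (R : ringType) (N : finType) (k : nat) (s : {set N} -> R)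
  (B : 'I_k -> {set N}) : 'cV[R]_k :=
  \col_(i < k) s (~: B i).

From mathcomp Require Import all_boot all_order all_algebra.
Import GRing.Theory.
Local Open Scope ring_scope.

(* Exchanging sums in [\sum_B [A :&: B = set0] hat s_B], the coefficient of
   s_C is a signed sum over the X with ~: C \subset X \subset ~: A.  It is
   [C == A]: the range is empty unless A \subset C, and toggling an element of
   C :\: A pairs its terms with opposite signs.  So F^{-1} inverts the type-4
   transform, and on the support this gives s = F^{-1}_{2^N,B} hat s_B and
   s_A = T hat s_B.  Finally T_ij = [B_j \subset B_i], so a nonzero
   off-diagonal entry goes from a set to a strictly smaller one: ordered by
   cardinality, T is triangular with unit diagonal. *)

Lemma sum_sign_reversing (V : zmodType) (I : finType) (t : I -> I)
    (P Q : pred I) (f : I -> V) :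
  involutive t -> (forall i, P (t i) = P i) -> (forall i, Q (t i) = ~~ Q i) ->
  (forall i, f (t i) = - f i) ->
  \sum_(i | P i) f i = 0.
Proof.
move=> tK Pt Qt ft; rewrite (bigID Q) /= (reindex_inj (inv_inj tK)) /=.
under eq_bigl => i do rewrite Pt Qt.
by rewrite (eq_bigr _ (fun i _ => ft i)) sumrN addNr.
Qed.

Section Fourier4Inversion.
Context {R : nzRingType} {N : finType}.
Implicit Types (A C X : {set N}) (c : N).

Definition toggle c X := if c \in X then X :\ c else c |: X.

Lemma toggleK c : involutive (toggle c).
Proof.
move=> X; rewrite {2}/toggle; case: ifPn => cX.
  by rewrite /toggle setD11 setD1K.
by rewrite /toggle setU11 setU1K.
Qed.

Lemma in_toggle c X : (c \in toggle c X) = (c \notin X).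
Proof. by rewrite /toggle; case: ifP; rewrite !inE eqxx. Qed.

Lemma toggle_setI c A X : c \notin A -> A :&: toggle c X = A :&: X.
Proof.
move=> cA; apply/setP=> x; rewrite /toggle !inE.
by case: ifP => _; rewrite !inE; case: eqP => // ->; rewrite (negbTE cA) ?andbF.
Qed.

Lemma toggle_setU c C X : c \in C -> C :|: toggle c X = C :|: X.
Proof.
move=> cC; apply/setP=> x; rewrite /toggle !inE.
by case: ifP => _; rewrite !inE; case: eqP => // ->; rewrite cC ?orbT.
Qed.

Lemma sign_setI_toggle c C X : c \in C ->
  (-1) ^+ #|C :&: toggle c X| = - (-1) ^+ #|C :&: X| :> R.
Proof.
move=> cC.
suff flip (Y : {set N}) :
    c \notin Y -> (-1) ^+ #|C :&: (c |: Y)| = - (-1) ^+ #|C :&: Y| :> R.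
  rewrite /toggle; case: ifPn => cX; last exact: flip.
  by rewrite -{2}(setD1K cX) flip ?setD11 // opprK.
move=> cY; rewrite setIUr (setIidPr _) ?sub1set // cardsU1 inE (negbTE cY).
by rewrite andbF exprS mulN1r.
Qed.

Lemma sum_fourier4_kernel A C :
  \sum_(X | (A :&: X == set0) && (C :|: X == setT)) (-1) ^+ #|C :&: X| =
  (C == A)%:R :> R.
Proof.
have [->|neCA] := eqVneq C A.
  rewrite (big_pred1 (~: A)) ?setICr ?cards0 // => X.
  apply/andP/eqP => [[/eqP AX0 /eqP AXT]|->]; last by rewrite setICr setUCr.
  apply/setP=> x; move/setP: AX0 => /(_ x); move/setP: AXT => /(_ x).
  by rewrite !inE; case: (x \in A); case: (x \in X).
rewrite -[false%:R]/(0 : R).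
have [/subsetPn [c cC cA] | sCA] := boolP (~~ (C \subset A)).
  apply: (@sum_sign_reversing _ _ (toggle c) _ (fun X => c \in X) _ (toggleK c))
    => X /=.
  - by rewrite toggle_setI ?toggle_setU.
  - exact: in_toggle.
  - by rewrite sign_setI_toggle.
have [a aA aC] : exists2 a, a \in A & a \notin C.
  apply/subsetPn; apply: contra neCA => sAC.
  by rewrite eqEsubset sAC (negPn sCA).
rewrite big_pred0 // => X; apply/negbTE/nandP.
have [aX|aX] := boolP (a \in X).
  by left; apply/set0Pn; exists a; rewrite inE aA.
by right; apply/eqP => /setP /(_ a); rewrite !inE (negbTE aC) (negbTE aX).
Qed.

Lemma fourier4_inversion (s : {set N} -> R) A :
  s A = \sum_X Finv_entry R A X * fourier4 s X.
Proof.
rewrite /Finv_entry /fourier4.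
under eq_bigr => X _ do rewrite big_distrr /= big_mkcond /=.
rewrite exchange_big (eq_bigr (fun C : {set N} => (C == A)%:R * s C)) => [|C _].
  rewrite (bigD1 A) //= eqxx mul1r big1 ?addr0 // => C /negbTE ->.
  exact: mul0r.
rewrite -sum_fourier4_kernel big_distrl [RHS]big_mkcond; apply: eq_bigr => X _.
by case: ifP; case: (_ == set0); rewrite /= ?andbF ?mul1r ?mul0r.
Qed.

Lemma fourier4_inversion_supp (s : {set N} -> R) {k} (B : 'I_k -> {set N}) :
  injective B -> (forall X, fourier4 s X != 0 -> exists i, X = B i) ->
  forall A, s A = \sum_j Finv_entry R A (B j) * fourier4 s (B j).
Proof.
move=> injB suppB A; rewrite fourier4_inversion (bigID (mem (B @: setT))) /=.
rewrite [X in _ + X]big1 ?addr0 => [|X notBX]; last first.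
  have [-> | /suppB [i eX]] := eqVneq (fourier4 s X) 0; first by rewrite mulr0.
  by rewrite eX imset_f in notBX.
rewrite big_imset => [|i j _ _ /injB //].
by apply: eq_bigl => i; rewrite inE.
Qed.

End Fourier4Inversion.

Lemma unitmx_weighted_trig (F : fieldType) k (M : 'M[F]_k) (w : 'I_k -> nat) :
  (forall i, M i i != 0) ->
  (forall i j, i != j -> M i j != 0 -> (w j < w i)%N) ->
  M \in unitmx.
Proof.
move=> Mii Mij; rewrite unitmxE unitfE; apply/det0P => -[v /rV0Pn [i0 vi0] vM0].
have [j vj jmax] := @arg_maxnP _ i0 (fun i => v 0 i != 0) w vi0.
have := congr1 (fun u : 'rV_k => u 0 j) vM0.
rewrite !mxE (bigD1 j) //= big1 ?addr0 => [|i nij].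
  by move/eqP; rewrite mulf_eq0 (negbTE vj) (negbTE (Mii j)).
have [-> | vi] := eqVneq (v 0 i) 0; first by rewrite mul0r.
have [-> | Mij0] := eqVneq (M i j) 0; first by rewrite mulr0.
by move: (jmax i vi) => /(leq_trans (Mij i j nij Mij0)); rewrite ltnn.
Qed.

Lemma Finv_entry_setC (R : nzRingType) {N : finType} (A B : {set N}) :
  Finv_entry R (~: A) B = (B \subset A)%:R.
Proof. by rewrite /Finv_entry setI_eq0 disjoints_subset setCS. Qed.

Lemma Tmat_unitmx (F : fieldType) {N : finType} {k} (B : 'I_k -> {set N}) :
  injective B -> Tmat F B \in unitmx.
Proof.
move=> injB.
apply: (@unitmx_weighted_trig _ _ _ (fun i => #|B i|)) => [i|i j nij].
  by rewrite mxE Finv_entry_setC subxx oner_neq0.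
rewrite mxE Finv_entry_setC.
have [sBji _ | _] := boolP (B j \subset B i); last by rewrite mulr0n eqxx.
apply: proper_card; rewrite properEneq sBji andbT.
by apply: contra nij => /eqP /injB ->.
Qed.

Theorem theorem4 (R : realFieldType) (N : finType) (s : {set N} -> R)
  (k : nat) (B : 'I_k -> {set N}) :
  injective B ->
  (forall X : {set N}, fourier4 s X != 0 <-> exists i : 'I_k, X = B i) ->
  Tmat R B \in unitmx /\
  svec s = (Finv_cols R B *m invmx (Tmat R B)) *m svecA s B.
Proof.
move=> injB suppB.
have inv_s := fourier4_inversion_supp s B injB (fun X => (suppB X).1).
pose s_hat := \col_j fourier4 s (B j).
have sA : svecA s B = Tmat R B *m s_hat.
  apply/matrixP => i ?; rewrite !mxE inv_s.
  by apply: eq_bigr => j _; rewrite !mxE.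
have sN : svec s = Finv_cols R B *m s_hat.
  apply/matrixP => a ?; rewrite !mxE inv_s.
  by apply: eq_bigr => j _; rewrite !mxE.
have unitT := Tmat_unitmx R B injB.
by split; rewrite // sN sA -mulmxA mulKmx.
Qed.
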